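(* Let $\mathbb{A}$ be a non-empty set, $\varphi:\mathbb{A}^+\to C$ a finite coloring, $x\in\mathbb{A}^\omega$ and $k\ge1$. Then some suffix $x'$ of $x$ admits a $k$-shift invariant $\varphi$-sequentially monochromatic factorization.
   Context: $T$ denotes the shift on $\mathbb{A}^\omega$, $T(x_0x_1x_2\cdots)=x_1x_2\cdots$. A factorization $x'=V_0V_1V_2\cdots$ with all $V_i\in\mathbb{A}^+$ is $\varphi$-sequentially monochromatic if there is $c\in C$ with $\varphi(V_iV_{i+1}\cdots V_{i+j})=c$ for all $i,j\ge0$. Such a factorization is $k$-shift invariant if for every $1\le j\le k$ the induced factorization $T^j(x')=W_0W_1W_2\cdots$ with $|W_i|=|V_i|$ for all $i$ is also $\varphi$-sequentially monochromatic (the color may depend on $j$). *)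

From mathcomp Require Import all_boot.
Set Implicit Arguments. Unset Strict Implicit. Unset Printing Implicit Defensive.

(* A coloring of A^+ is a function phi : seq A -> C (its value on the empty
   word is irrelevant: it is only ever applied to non-empty words). *)

Definition shiftw (A : Type) (n : nat) (x : nat -> A) : nat -> A :=
  fun i => x (n + i).

Definition factorw (A : Type) (x : nat -> A) (m n : nat) : seq A :=
  mkseq (fun i => x (m + i)) (n - m).

(* A factorization V_0 V_1 V_2 ... of an infinite word into non-empty words
   is encoded by its cut points c : c 0 = 0, c strictly increasing, and
   V_i = x[c i, c (i+1)). *)
Definition is_factorization (c : nat -> nat) : Prop :=
  c 0 = 0 /\ forall i, c i < c i.+1.

Definition seq_mono (A : Type) (C : Type) (phi : seq A -> C)
    (x : nat -> A) (c : nat -> nat) : Prop :=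
  exists col : C, forall i j, phi (factorw x (c i) (c (i + j).+1)) = col.

(* k-shift invariance: for 1 <= j <= k, the induced factorization of T^j x
   with the same block lengths (i.e. the same cut points) is also
   phi-sequentially monochromatic. *)
Definition k_shift_invariant (A : Type) (C : Type) (phi : seq A -> C)
    (x : nat -> A) (c : nat -> nat) (k : nat) : Prop :=
  forall j, 1 <= j <= k -> seq_mono phi (shiftw j x) c.

(* Color a pair of positions m < n of x by the tuple of colors
   (phi(x[m+j, n+j)))_{j <= k}; this is a finite coloring of pairs, so the
   infinite Ramsey theorem yields positions d_0 < d_1 < ... all of whose pairs
   get the same tuple.  Cutting the suffix starting at d_0 at the points d_i
   then gives a factorization that is monochromatic together with each of its
   first k shifts. *)

From Stdlib Require Import ClassicalEpsilon.
From mathcomp Require Import all_boot zify.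

Set Implicit Arguments.
Unset Strict Implicit.
Unset Printing Implicit Defensive.

Definition infinitely_many (P : nat -> Prop) := forall N, exists2 s, N < s & P s.

Lemma infinitely_many_all : infinitely_many (fun _ => True).
Proof. by move=> N; exists N.+1. Qed.

Lemma infinite_pigeonhole (C : finType) (g : nat -> C) (S : nat -> Prop) :
  infinitely_many S -> exists c, infinitely_many (fun s => S s /\ g s = c).
Proof.
move=> infS; apply: NNPP => no_col.
have [N bound_N] : exists N : C -> nat, forall c s, N c < s -> ~ (S s /\ g s = c).
  apply: (choice (fun c N => forall s, N < s -> ~ (S s /\ g s = c))) => c.
  apply: NNPP => unbounded; apply: no_col; exists c => M.
  apply: NNPP => none; apply: unbounded; exists M => s ltMs Ss.
  by apply: none; exists s.
have [s lt_s Ss] := infS (\max_c N c).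
by apply: (bound_N (g s) s); [exact: leq_ltn_trans (leq_bigmax _) lt_s | split].
Qed.

Lemma infinitely_many_enum (P : nat -> Prop) : infinitely_many P ->
  exists e : nat -> nat, {homo e : a b / a < b} /\ forall a, P (e a).
Proof.
move=> infP; have [next next_spec] : exists next, forall N, N < next N /\ P (next N).
  by apply: (choice (fun N n => N < n /\ P n)) => N; have [s] := infP N; exists s.
exists (fun a => iter a.+1 next 0); split; last by move=> a; exact: (next_spec _).2.
by apply: homo_ltn => [|a]; [exact: ltn_trans | exact: (next_spec _).1].
Qed.

Lemma infinitely_many_gt (S : nat -> Prop) p :
  infinitely_many S -> infinitely_many (fun s => S s /\ p < s).
Proof.
move=> infS N; have [s lt_s Ss] := infS (maxn N p).
by exists s; [|split=> //]; lia.
Qed.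

Section InfiniteRamsey.
Variables (C : finType) (f : nat -> nat -> C).

Definition pivot_of (S : nat -> Prop) (pc : nat * C) :=
  S pc.1 /\ infinitely_many (fun s => (S s /\ pc.1 < s) /\ f pc.1 s = pc.2).

Lemma exists_pivot S : infinitely_many S -> exists pc, pivot_of S pc.
Proof.
move=> infS; have [p _ Sp] := infS 0.
have [c infc] := infinite_pigeonhole (f p) (infinitely_many_gt p infS).
by exists (p, c).
Qed.

Section Pivots.
Variables (pick : (nat -> Prop) -> nat * C).
Hypothesis pick_pivot : forall S, infinitely_many S -> pivot_of S (pick S).

Definition refine (S : nat -> Prop) s :=
  (S s /\ (pick S).1 < s) /\ f (pick S).1 s = (pick S).2.

Definition level i := iter i refine (fun _ => True).

Definition pivot i := pick (level i).

Lemma level_infinite i : infinitely_many (level i).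
Proof.
elim: i => [|i infi]; first exact: infinitely_many_all.
exact: (pick_pivot infi).2.
Qed.

Lemma level_decr i j s : i <= j -> level j s -> level i s.
Proof.
move/subnKC <-; elim: (j - i) s => [|m IH] s; first by rewrite addn0.
by rewrite addnS => -[[/IH]].
Qed.

Lemma pivot_lt i j : i < j ->
  (pivot i).1 < (pivot j).1 /\ f (pivot i).1 (pivot j).1 = (pivot i).2.
Proof.
move=> lt_ij; have level_j := (pick_pivot (level_infinite j)).1.
by have [[_ ->] ->] := level_decr lt_ij level_j.
Qed.

End Pivots.

Theorem infinite_ramsey : exists (d : nat -> nat) (col : C),
  {homo d : a b / a < b} /\ forall a b, a < b -> f (d a) (d b) = col.
Proof.
have [pick pick_pivot] : exists pick, forall S, infinitely_many S -> pivot_of S (pick S).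
  apply: (choice (fun S pc => infinitely_many S -> pivot_of S pc)) => S.
  have [infS|finS] := classic (infinitely_many S).
    by have [pc] := exists_pivot infS; exists pc.
  by exists (0, f 0 0).
have [col infcol] := infinite_pigeonhole (fun i => (pivot pick i).2) infinitely_many_all.
have [e [e_homo e_col]] := infinitely_many_enum infcol.
exists (fun a => (pivot pick (e a)).1), col; split=> a b /e_homo /(pivot_lt pick_pivot) [//].
by move=> _ ->; have [] := e_col a.
Qed.

End InfiniteRamsey.

Lemma factorw_shiftw (A : Type) (x : nat -> A) n a b :
  factorw (shiftw n x) a b = factorw x (n + a) (n + b).
Proof. by rewrite /factorw subnDl; apply: eq_mkseq => t; rewrite /shiftw addnA. Qed.

Section Rebase.
Variables (d : nat -> nat) (d_homo : {homo d : a b / a < b}).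

Lemma leq_rebase i : d 0 <= d i.
Proof. by case: i => // i; exact/ltnW/d_homo. Qed.

Lemma is_factorization_rebase : is_factorization (fun i => d i - d 0).
Proof.
split=> [|i]; first by rewrite subnn.
by rewrite ltn_sub2rE ?leq_rebase ?d_homo.
Qed.

Lemma seq_mono_rebase (A C : Type) (phi : seq A -> C) (x : nat -> A) j col :
  (forall a b, a < b -> phi (factorw x (j + d a) (j + d b)) = col) ->
  seq_mono phi (shiftw j (shiftw (d 0) x)) (fun i => d i - d 0).
Proof.
move=> mono; exists col => i l; rewrite !factorw_shiftw !addnA ![_ + j]addnC.
by rewrite -!addnA !subnKC ?leq_rebase ?mono ?ltnS ?leq_addr.
Qed.

End Rebase.

Theorem corollary3p2 (A : Type) (C : finType) (phi : seq A -> C)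
    (x : nat -> A) (k : nat) (hk : 1 <= k) :
  exists (n : nat) (c : nat -> nat),
    is_factorization c /\
    seq_mono phi (shiftw n x) c /\
    k_shift_invariant phi (shiftw n x) c k.
Proof.
pose colors m n := [ffun j : 'I_k.+1 => phi (factorw x (j + m) (j + n))].
have [d [col [d_homo d_col]]] := infinite_ramsey colors.
have mono j : j <= k ->
    seq_mono phi (shiftw j (shiftw (d 0) x)) (fun i => d i - d 0).
  move=> le_jk; apply: (seq_mono_rebase d_homo (col := col (inord j))) => a b lt_ab.
  by rewrite -(d_col _ _ lt_ab) ffunE inordK.
exists (d 0), (fun i => d i - d 0); split; first exact: is_factorization_rebase.
(* [shiftw 0 y] is convertible to [y]. *)
by split=> [|j /andP [_ /mono]]; first exact: (mono 0).
Qed.
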